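(* Let $t\in\{0,\dots,T\}$ and let $\sigma_t:\mathcal{M}_t\to\mathcal{P}_t$, $\sigma_{t+1}:\mathcal{M}_{t+1}\to\mathcal{P}_{t+1}$ with $\Pi_t=\sigma_t(M_t)$, $\Pi_{t+1}=\sigma_{t+1}(M_{t+1})$. Suppose (a) there is a function $\bar f_t:\mathcal{P}_t\times\mathcal{U}_t\times\mathcal{Y}_{t+1}\to\mathcal{P}_{t+1}$ such that $\Pi_{t+1}=\bar f_t(\Pi_t,U_t,Y_{t+1})$, i.e. $\sigma_{t+1}(m_{t+1})=\bar f_t(\sigma_t(m_t),u_t,y_{t+1})$ whenever $m_{t+1}$ consists of $m_t$, $u_t$ and $y_{t+1}$; and (b) $[[Y_{t+1}|m_t,u_t]]=[[Y_{t+1}|\sigma_t(m_t),u_t]]$ for all $m_t\in[[M_t]]$, $u_t\in[[U_t]]$. Then $[[\Pi_{t+1}|m_t,u_t]]=[[\Pi_{t+1}|\sigma_t(m_t),u_t]]$ for all $m_t\in[[M_t]]$ and $u_t\in[[U_t]]$.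
   Context: Uncertain variables: fix a sample space $\Omega$; an uncertain variable with values in a set $\mathcal{X}$ is a map $X:\Omega\to\mathcal{X}$, with marginal range $[[X]]:=\{X(\omega):\omega\in\Omega\}$; uncertain variables are independent if their joint range is the product of their marginal ranges. System: horizon $T\in\mathbb{N}$. For $t=0,\dots,T$ there are independent disturbances $W_t\in\mathcal{W}_t$, actions $U_t\in\mathcal{U}_t$ taking values in a given set $[[U_t]]\subseteq\mathcal{U}_t$, observations $Y_0=h_0(W_0)$, $Y_{t+1}=h_{t+1}(W_{0:t},U_{0:t})$, and costs $C_t=d_t(W_{0:t},U_{0:t})\in\mathcal{C}_t\subset\mathbb{R}_{\ge0}$. The memory is $M_t=(Y_{0:t},U_{0:t-1})\in\mathcal{M}_t:=\prod_{\ell=0}^t\mathcal{Y}_\ell\times\prod_{\ell=0}^{t-1}\mathcal{U}_\ell$. Strategy-independent ranges: for $m_t=(y_{0:t},u_{0:t-1})$ let $\mathcal{W}(m_t)$ be the set of $w_{0:t}\in\prod_{\ell=0}^t[[W_\ell]]$ with $y_0=h_0(w_0)$ and $y_\ell=h_\ell(w_{0:\ell-1},u_{0:\ell-1})$ for $\ell=1,\dots,t$. Let $[[M_t]]$ be the set of such $m_t$ with $u_\ell\in[[U_\ell]]$ and $\mathcal{W}(m_t)\neq\emptyset$. For $m_t\in[[M_t]]$, $u_t\in[[U_t]]$: $[[Y_{t+1}|m_t,u_t]]:=\{h_{t+1}(w_{0:t},u_{0:t}):w_{0:t}\in\mathcal{W}(m_t)\}$, $[[M_{t+1}|m_t,u_t]]:=\{(m_t,u_t,y_{t+1}):y_{t+1}\in[[Y_{t+1}|m_t,u_t]]\}$.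 For $\Pi_t=\sigma_t(M_t)$: $[[M_t|\pi_t]]:=\{m_t\in[[M_t]]:\sigma_t(m_t)=\pi_t\}$, $[[\Pi_{t+1}|m_t,u_t]]:=\{\sigma_{t+1}(m_{t+1}):m_{t+1}\in[[M_{t+1}|m_t,u_t]]\}$, and for $Z\in\{Y_{t+1},\Pi_{t+1}\}$, $[[Z|\pi_t,u_t]]:=\bigcup_{m_t\in[[M_t|\pi_t]]}[[Z|m_t,u_t]]$. *)

From mathcomp Require Import all_boot.
From mathcomp Require Import boolp classical_sets.
Unset Printing Implicit Defensive.
Local Open Scope classical_set_scope.

(* Histories are built as telescopes: X_{0:t+1} = X_{0:t} * X_{t+1}. *)
Fixpoint hist (X : nat -> Type) (t : nat) : Type :=
  match t with 0 => X 0 | t'.+1 => (hist X t' * X t'.+1)%type end.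

(* Memory M_t = (Y_{0:t}, U_{0:t-1}), as M_0 = Y_0, M_{t+1} = (M_t, U_t, Y_{t+1}). *)
Fixpoint MemT (Y U : nat -> Type) (t : nat) : Type :=
  match t with 0 => Y 0 | t'.+1 => (MemT Y U t' * U t' * Y t'.+1)%type end.

Record system := System {
  Wsp : nat -> Type;
  Usp : nat -> Type;
  Ysp : nat -> Type;
  RW : forall t, set (Wsp t);
  RU : forall t, set (Usp t);
  h0 : Wsp 0 -> Ysp 0;
  hs : forall t, hist Wsp t -> hist Usp t -> Ysp t.+1  (* hs t = h_{t+1} *)
}.

Section Ranges.
Variable S : system.
Local Notation W := (Wsp S). Local Notation U := (Usp S). Local Notation Y := (Ysp S).
Local Notation M := (MemT Y U).

Fixpoint useq (t : nat) : M t -> U t -> hist U t :=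
  match t return M t -> U t -> hist U t with
  | 0 => fun _ u => u
  | t'.+1 => fun m u => let: (m', u', _) := m in (useq t' m' u', u)
  end.

Fixpoint Wm (t : nat) : M t -> set (hist W t) :=
  match t return M t -> set (hist W t) with
  | 0 => fun y0 => [set w0 | RW S 0 w0 /\ y0 = h0 S w0]
  | t'.+1 => fun m => let: (m', u', y) := m in
      [set w | Wm t' m' w.1 /\ RW S t'.+1 w.2 /\ y = hs S t' w.1 (useq t' m' u')]
  end.

Fixpoint Uok (t : nat) : M t -> Prop :=
  match t return M t -> Prop with
  | 0 => fun _ => True
  | t'.+1 => fun m => let: (m', u', _) := m in Uok t' m' /\ RU S t' u'
  end.

Definition RM (t : nat) : set (M t) := [set m | Uok t m /\ Wm t m !=set0].

Definition RY (t : nat) (m : M t) (u : U t) : set (Y t.+1) :=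
  [set hs S t w (useq t m u) | w in Wm t m].

Definition RM1 (t : nat) (m : M t) (u : U t) : set (M t.+1) :=
  [set (m, u, y) | y in RY t m u].

Definition RMpi (t : nat) (P : Type) (sigma : M t -> P) (pi : P) : set (M t) :=
  [set m | RM t m /\ sigma m = pi].

Definition RPi1 (t : nat) (P1 : Type) (sigma1 : M t.+1 -> P1)
  (m : M t) (u : U t) : set P1 := sigma1 @` RM1 t m u.

Definition RYpi (t : nat) (P : Type) (sigma : M t -> P) (pi : P) (u : U t)
  : set (Y t.+1) := \bigcup_(m in RMpi t P sigma pi) RY t m u.

Definition RPi1pi (t : nat) (P P1 : Type) (sigma : M t -> P)
  (sigma1 : M t.+1 -> P1) (pi : P) (u : U t) : set P1 :=
  \bigcup_(m in RMpi t P sigma pi) RPi1 t P1 sigma1 m u.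

End Ranges.
Arguments RM {S t}.
Arguments RY {S t}.
Arguments RM1 {S t}.
Arguments RMpi {S t P}.
Arguments RPi1 {S t P1}.
Arguments RYpi {S t P}.
Arguments RPi1pi {S t P P1}.
Arguments Wm {S t}.
Arguments useq {S t}.
Arguments Uok {S t}.

From mathcomp Require Import all_boot.
From mathcomp Require Import boolp classical_sets.
Local Open Scope classical_set_scope.

(* By (a), the range of Pi_{t+1} given m_t, u_t is the image of the range of
   Y_{t+1} given m_t, u_t under fbar(sigma_t m_t, u_t, .), and the same holds
   conditionally on pi_t; so the equality of observation ranges (b) is carried
   over to the information states by taking images. *)

Section InformationStateRanges.

Context {S : system} {t : nat} {P P1 : Type}.
Context {sigma : MemT (Ysp S) (Usp S) t -> P}
        {sigma1 : MemT (Ysp S) (Usp S) t.+1 -> P1}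
        {fbar : P -> Usp S t -> Ysp S t.+1 -> P1}.
Hypothesis sigma1_fbar : forall m u y, sigma1 (m, u, y) = fbar (sigma m) u y.

Lemma RPi1_image m u : RPi1 sigma1 m u = fbar (sigma m) u @` RY m u.
Proof. by rewrite /RPi1 /RM1 image_comp; apply: eq_imagel => y _ /=. Qed.

Lemma RPi1pi_image pi u :
  RPi1pi sigma sigma1 pi u = fbar pi u @` RYpi sigma pi u.
Proof.
rewrite /RPi1pi /RYpi image_bigcup; apply: eq_bigcupr => m [_ <-].
exact: RPi1_image.
Qed.

End InformationStateRanges.

Theorem lemma1 (S : system) (T t : nat) (Ht : t <= T)
  (P P1 : Type)
  (sigma : MemT (Ysp S) (Usp S) t -> P)
  (sigma1 : MemT (Ysp S) (Usp S) t.+1 -> P1) :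
  (exists fbar : P -> Usp S t -> Ysp S t.+1 -> P1,
      forall m u y, sigma1 (m, u, y) = fbar (sigma m) u y) ->
  (forall m u, RM m -> RU S t u -> RY m u = RYpi sigma (sigma m) u) ->
  forall m u, RM m -> RU S t u ->
    RPi1 sigma1 m u = RPi1pi sigma sigma1 (sigma m) u.
Proof.
move=> [fbar sigma1_fbar] RY_RYpi m u Mm Uu.
rewrite (RPi1_image sigma1_fbar) (RPi1pi_image sigma1_fbar).
by rewrite (RY_RYpi m u Mm Uu).
Qed.
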